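(* Let $I=(T,((U_1,S_1),\dots,(U_k,S_k)))$ be an instance of \textsc{Generalized Graphic Inverse Voronoi in Trees} in which $U_1,\dots,U_k$ are pairwise disjoint subsets of $V(T)$, each inducing a connected subtree of $T$. Let $n=|V(T)|$, let $0<\delta<\mathrm{res}'(I)/(6n)$ and $\delta'=\delta/(4n)$, and let $I'=(T',((U_1',S_1'),\dots,(U_k',S_k')))$ be the instance constructed below. Then the answer to $I$ is ``yes'' if and only if the answer to $I'$ is ``yes''.
   Context: \textsc{Generalized Graphic Inverse Voronoi in Trees}: input is a tree $T$ with positive edge-lengths $\lambda$ and pairs $(U_i,S_i)$, $i\in[k]$, of subsets of $V(T)$ with $U_1,\dots,U_k$ covering $V(T)$; the answer is ``yes'' if there are $s_1,\dots,s_k$ with $s_i\in S_i$ and $U_i=\mathrm{cell}_T(s_i,\{s_1,\dots,s_k\})$ for all $i$, where $\mathrm{cell}_T(s,\Sigma)=\{x\mid d_T(s,x)\le d_T(s',x)\ \forall s'\in\Sigma\}$ and $d_T$ is shortest-path distance. Define $\mathrm{res}'(I)=\min\bigl(\mathbb{R}_{>0}\cap\{d_T(v,u)-d_T(v',u)\mid v,v',u\in V(T)\}\bigr)$. Construction of $T'$ with lengths $\lambda'$: for each edge $uv$ of $T$ create two vertices $a_{u,v},a_{v,u}$ joined by an edge, of length $\lambda(uv)$ if $u,v$ lie in the same $U_i$ and of length $\lambda(uv)-\delta$ otherwise; for each vertex $u$ of $T$, connect the vertices $\{a_{u,v}\mid uv\in E(T)\}$ by a path (in some order) whose edges have length $\delta'$.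 Set $U_i'=\{a_{u,v}\mid u\in U_i,\ uv\in E(T)\}$ and $S_i'=\{a_{u,v}\mid u\in S_i,\ uv\in E(T)\}$. *)

From HB Require Import structures.
From mathcomp Require Import all_boot all_order all_algebra.
From mathcomp Require Import boolp classical_sets reals.
Set Implicit Arguments. Unset Strict Implicit. Unset Printing Implicit Defensive.
Import Order.TTheory GRing.Theory Num.Theory.
Local Open Scope ring_scope.

Section Graphs.
Variables (R : realType) (V : finType).

Definition is_tree (e : rel V) : Prop :=
  [/\ symmetric e, irreflexive e, (forall x y, connect e x y) &
      ~ (exists p : seq V, [/\ uniq p, (3 <= size p)%N & cycle e p])].

Fixpoint walk_len (w : V -> V -> R) (x : V) (p : seq V) : R :=
  if p is y :: q then w x y + walk_len w y q else 0.

Definition dist (e : rel V) (w : V -> V -> R) (x y : V) : R :=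
  inf [set r | exists p : seq V,
         [/\ path e x p, last x p = y & r = walk_len w x p]].

Definition cell (e : rel V) (w : V -> V -> R) (k : nat) (s : 'I_k -> V)
    (i : 'I_k) : {set V} :=
  [set x | [forall j, dist e w (s i) x <= dist e w (s j) x]].

Definition GGIV_yes (e : rel V) (w : V -> V -> R) (k : nat)
    (U S : 'I_k -> {set V}) : Prop :=
  exists s : 'I_k -> V,
    (forall i, s i \in S i) /\ (forall i, U i = cell e w s i).

(** res'(I) = min (R_{>0} ∩ {d(v,u) - d(v',u)}) (inf of a finite set). *)
Definition res' (e : rel V) (w : V -> V -> R) : R :=
  inf [set r | 0 < r /\ exists v v' u : V, r = dist e w v u - dist e w v' u].

Definition induced_connected (e : rel V) (A : {set V}) : Prop :=
  forall x y, x \in A -> y \in A ->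
    connect [rel a b | [&& e a b, a \in A & b \in A]] x y.

End Graphs.

(** Construction of T'.  Vertices a_{u,v} are the darts (u,v) with uv an edge. *)
Definition dart (V : finType) (e : rel V) := {p : V * V | e p.1 p.2}.

Section Construction.
Variables (R : realType) (V : finType) (e : rel V).

(** ord u lists the neighbours of u in the chosen order; consecutive
    entries x,y of ord u give an edge a_{u,x} a_{u,y} of T'. *)
Definition consec (s : seq V) (x y : V) : bool :=
  ((x, y) \in zip s (behead s)) || ((y, x) \in zip s (behead s)).

Definition Tp_edge (ord : V -> seq V) : rel (dart e) :=
  fun a b =>
    (((val a).1 == (val b).2) && ((val a).2 == (val b).1))
    || (((val a).1 == (val b).1) && consec (ord (val a).1) (val a).2 (val b).2).

Definition same_part (k : nat) (U : 'I_k -> {set V}) (u v : V) : bool :=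
  [exists i, (u \in U i) && (v \in U i)].

Definition Tp_len (lam : V -> V -> R) (k : nat) (U : 'I_k -> {set V})
    (delta delta' : R) : dart e -> dart e -> R :=
  fun a b =>
    if ((val a).1 == (val b).2) && ((val a).2 == (val b).1) then
      (if same_part U (val a).1 (val a).2 then lam (val a).1 (val a).2
       else lam (val a).1 (val a).2 - delta)
    else delta'.

Definition Tp_set (k : nat) (U : 'I_k -> {set V}) (i : 'I_k) : {set dart e} :=
  [set a : dart e | (val a).1 \in U i].

End Construction.

(* In a tree the darts (p, q) whose removal separates u from w are the two
   orientations of the edges on the u-w path, so summing a symmetric nonnegative
   weight over them gives twice the length of that path and at most twice the
   length of any u-w walk.  Projecting a walk of T' to T therefore bounds d'(a, b)
   below by the length of the tree path from a.1 to b.1 for the weights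
   lambda - delta [the edge leaves a part]; conversely this path lifts to T' at an
   extra cost of delta' per neighbour of each visited vertex, at most
   2 n delta' = delta / 2.  So d'(a, b) lies within delta / 2 above
   d(a.1, b.1) - delta beta, where beta, the number of part boundaries on the path,
   is 0 inside a part (parts are connected), at least 1 across parts and at most
   n - 1.  Distinct distances of T differ by at least res' > 6 n delta, hence every
   vertex has the same nearest site in T and in T'. *)

From mathcomp Require Import all_boot all_order all_algebra.
From mathcomp Require Import boolp classical_sets reals.
From mathcomp Require Import ring lra.
Import Order.TTheory GRing.Theory Num.Theory.
Local Open Scope ring_scope.
Set Implicit Arguments. Unset Strict Implicit. Unset Printing Implicit Defensive.

Section Walks.
Variables (R : realType) (T : finType) (E : rel T) (w : T -> T -> R).

Lemma walk_len_cat x s1 s2 :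
  walk_len w x (s1 ++ s2) = walk_len w x s1 + walk_len w (last x s1) s2.
Proof. by elim: s1 x => [|y s IH] x /=; rewrite ?add0r // IH addrA. Qed.

Lemma walk_lenBM (w' : T -> T -> R) c x s :
  walk_len (fun u v => w u v - c * w' u v) x s = walk_len w x s - c * walk_len w' x s.
Proof. by elim: s x => [|y s IH] x /=; rewrite ?mulr0 ?subr0 // IH; ring. Qed.

Lemma le_dist x s y lo : path E x s -> last x s = y ->
  (forall t, path E x t -> last x t = y -> lo <= walk_len w x t) ->
  lo <= dist E w x y.
Proof.
move=> xs sy lo_le; apply: lb_le_inf; first by exists (walk_len w x s), s.
by move=> _ [t [xt ty ->]]; exact: lo_le.
Qed.

Hypothesis w_ge0 : forall a b, E a b -> 0 <= w a b.

Lemma walk_len_ge0 x s : path E x s -> 0 <= walk_len w x s.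
Proof.
elim: s x => [|y s IH] x //= /andP[xy ys].
by rewrite addr_ge0 ?w_ge0 ?IH.
Qed.

Lemma dist_ge0 x y : 0 <= dist E w x y.
Proof.
rewrite /dist; match goal with |- context [inf ?X] => set W := X end.
have [[r Wr]|W0] := pselect (exists r, W r); last first.
  rewrite (_ : W = set0) ?inf0 // predeqE => r; split => // Wr.
  exact: W0 (ex_intro _ r Wr).
apply: lb_le_inf; first by exists r.
by move=> _ [s [xs _ ->]]; exact: walk_len_ge0.
Qed.

Lemma dist_le_walk x s : path E x s -> dist E w x (last x s) <= walk_len w x s.
Proof.
move=> xs; apply: ge_inf; last by exists s.
by exists 0 => _ [t [xt _ ->]]; exact: walk_len_ge0.
Qed.

Lemma dist_xx x : dist E w x x = 0.
Proof. by apply/le_anti; rewrite dist_ge0 (dist_le_walk (x := x) (s := [::])). Qed.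

Lemma mem_cell_strict k (s : 'I_k -> T) x m :
  (forall j, j != m -> dist E w (s m) x < dist E w (s j) x) ->
  forall i, (x \in cell E w s i) = (i == m).
Proof.
move=> m_nearest i; rewrite inE; have [->|im] := eqVneq i m.
  by apply/forallP => j; have [->//|jm] := eqVneq j m; exact/ltW/m_nearest.
by apply/negbTE/forallP => /(_ m); rewrite leNgt m_nearest.
Qed.

End Walks.

Section ConsecutivePath.
Variable T : finType.

Lemma consec_cons (a : T) s x y : consec s x y -> consec (a :: s) x y.
Proof. by case: s => [|b s] //; rewrite /consec /= !inE => /orP[] ->; rewrite ?orbT. Qed.

Lemma consec_head (a b : T) s : consec [:: a, b & s] a b.
Proof. by rewrite /consec /= inE eqxx. Qed.

Lemma consecC (s : seq T) x y : consec s x y = consec s y x.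
Proof. by rewrite /consec orbC. Qed.

Lemma consec_path (s : seq T) z1 z2 : z1 \in s -> z2 \in s ->
  exists2 q, [/\ path (consec s) z1 q, last z1 q = z2 & all (mem s) q]
           & (size q < size s)%N.
Proof.
elim: s z1 z2 => [|a s IH] z1 z2 //; rewrite !inE.
have sub_s x q : path (consec s) x q -> path (consec (a :: s)) x q.
  by apply: sub_path => u v; exact: consec_cons.
have sub_all q : all (mem s) q -> all (mem (a :: s)) q.
  by apply: sub_all => u /= su; rewrite inE su orbT.
case/orP => [/eqP -> | z1s]; case/orP => [/eqP -> | z2s].
- by exists [::].
- case: s IH sub_s sub_all z2s => [|b s] // IH sub_s sub_all z2s.
  have [q [bq qz2 qs] sq] := IH b z2 (mem_head _ _) z2s.
  exists (b :: q) => //=; split => //.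
    by rewrite consec_head sub_s.
  by rewrite inE mem_head orbT sub_all.
- case: s IH sub_s sub_all z1s => [|b s] // IH sub_s sub_all z1s.
  have [q [z1q qb qs] sq] := IH z1 b z1s (mem_head _ _).
  exists (rcons q a); last by rewrite size_rcons.
  split; last by rewrite all_rcons /= mem_head sub_all.
    by rewrite rcons_path sub_s //= qb consecC consec_head.
  by rewrite last_rcons.
- have [q [z1q qz2 qs] sq] := IH z1 z2 z1s z2s.
  by exists q; [split => //; [exact: sub_s | exact: sub_all] | exact: ltn_trans sq _].
Qed.

End ConsecutivePath.

Section Tree.
Variables (R : realType) (V : finType) (e : rel V).
Hypothesis e_sym : symmetric e.
Hypothesis e_irr : irreflexive e.
Hypothesis e_conn : forall x y, connect e x y.
Hypothesis e_acyclic : ~ exists p : seq V, [/\ uniq p, (3 <= size p)%N & cycle e p].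

Lemma edge_neq x y : e x y -> x != y.
Proof. by apply: contraTneq => ->; rewrite e_irr. Qed.

Lemma tree_path_exists x y : exists P, [&& path e x P, last x P == y & uniq (x :: P)].
Proof.
have /connectP [s xs ->] := e_conn x y.
by case: (shortenP xs) => P xP uP _; exists P; rewrite xP uP eqxx.
Qed.

Definition tree_path x y : seq V := xchoose (tree_path_exists x y).

Lemma tree_pathP x y :
  [/\ path e x (tree_path x y), last x (tree_path x y) = y & uniq (x :: tree_path x y)].
Proof. by have /and3P[? /eqP ? ?] := xchooseP (tree_path_exists x y). Qed.

Definition dart_of (u v : V) (uv : e u v) : dart e := exist _ (u, v) uv.

Lemma rev_dartP (a : dart e) : e (val a).2 (val a).1.
Proof. by rewrite e_sym; exact: valP a. Qed.

Definition rev_dart (a : dart e) : dart e := exist _ ((val a).2, (val a).1) (rev_dartP a).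

Definition rm_edge (p q : V) : rel V :=
  fun a b => e a b && ~~ (((a == p) && (b == q)) || ((a == q) && (b == p))).

Lemma rm_edge_sym p q : symmetric (rm_edge p q).
Proof.
move=> a b; rewrite /rm_edge e_sym; congr (_ && _).
by case: (a == p); case: (b == q); case: (a == q); case: (b == p).
Qed.

Lemma rm_edgeC p q : rm_edge p q =2 rm_edge q p.
Proof.
move=> a b; rewrite /rm_edge; congr (_ && _).
by case: (a == p); case: (b == q); case: (a == q); case: (b == p).
Qed.

Lemma connect_rm_edgeC p q x y :
  connect (rm_edge p q) x y = connect (rm_edge p q) y x.
Proof. exact: (sym_connect_sym (@rm_edge_sym p q)). Qed.

Lemma rm_edge_disconnects p q : e p q -> ~~ connect (rm_edge p q) p q.
Proof.
move=> pq; apply/negP => /connectP [s ps]; case: (shortenP ps) => s' ps' us' _ qs'.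
apply: e_acyclic; exists (p :: s'); split => //.
  case: s' ps' us' qs' => [|y [|z s'']] //=.
    by move=> _ _ qp; move: (edge_neq pq); rewrite qp eqxx.
  by move=> py _ qy; move: py; rewrite -qy /rm_edge !eqxx andbF.
rewrite /= rcons_path -qs' e_sym pq andbT.
by apply: sub_path ps' => a b /andP[].
Qed.

Lemma path_rm_edge x z a s : path e a s -> x \notin a :: s -> path (rm_edge x z) a s.
Proof.
move=> a_s x_s; apply: (sub_in_path (P := predC1 x)) a_s; last by rewrite all_predC has_pred1.
move=> u v; rewrite !inE => ux vx uv.
by rewrite /rm_edge uv (negbTE ux) (negbTE vx) andbF.
Qed.

Definition side (f : V * V) (v : V) : bool := connect (rm_edge f.1 f.2) f.1 v.

Definition separates (f : V * V) (u w : V) : bool := side f u != side f w.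

Definition cut_len (h : V -> V -> R) (u w : V) : R :=
  \sum_(f : V * V | e f.1 f.2) (separates f u w)%:R * h f.1 f.2.

Lemma side_edge f x y : e x y -> f != (x, y) -> f != (y, x) -> side f x = side f y.
Proof.
case: f => p q xy nxy nyx.
have rm_xy : rm_edge p q x y.
  rewrite /rm_edge xy /=; apply/negP => /orP[] /andP[/eqP xp /eqP yq].
    by move: nxy; rewrite xp yq eqxx.
  by move: nyx; rewrite xp yq eqxx.
rewrite /side /=; apply/idP/idP => h; first exact: connect_trans h (connect1 rm_xy).
by apply: connect_trans h (connect1 _); rewrite rm_edge_sym.
Qed.

Lemma cut_len_xx h w : cut_len h w w = 0.
Proof. by rewrite /cut_len big1 // => f _; rewrite /separates eqxx mul0r. Qed.

Lemma cut_len_edge h x y w : e x y ->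
  cut_len h x w = cut_len h y w
    + ((separates (x, y) x w)%:R - (separates (x, y) y w)%:R) * h x y
    + ((separates (y, x) x w)%:R - (separates (y, x) y w)%:R) * h y x.
Proof.
move=> xy; have yx : e y x by rewrite e_sym.
have xy_yx : (x, y) != (y, x) by rewrite xpair_eqE negb_and edge_neq.
pose rest z := \sum_(f : V * V | [&& e f.1 f.2, f != (x, y) & f != (y, x)])
  (separates f z w)%:R * h f.1 f.2.
have cut_split z : cut_len h z w =
    (separates (x, y) z w)%:R * h x y + (separates (y, x) z w)%:R * h y x + rest z.
  rewrite /cut_len (bigD1 (x, y)) //= (bigD1 (y, x)) /=; last by rewrite yx eq_sym.
  by rewrite addrA; congr (_ + _); apply: eq_bigl => f; rewrite andbA.
have rest_xy : rest x = rest y.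
  by apply: eq_bigr => f /and3P[_ fxy fyx]; rewrite /separates (side_edge xy fxy fyx).
rewrite !cut_split rest_xy; ring.
Qed.

Lemma cut_len_le_edge h x y w : (forall p q, e p q -> 0 <= h p q) -> e x y ->
  cut_len h x w <= cut_len h y w + h x y + h y x.
Proof.
move=> h_ge0 xy; rewrite (cut_len_edge h w xy) -!addrA lerD2l.
have le_h (b1 b2 : bool) (c : R) : 0 <= c -> (b1%:R - b2%:R) * c <= c.
  by move=> c0; case: b1; case: b2 => /=; lra.
by rewrite lerD ?le_h ?h_ge0 // e_sym.
Qed.

Lemma cut_len_edge_far h x y w : e x y -> connect (rm_edge x y) y w ->
  cut_len h x w = cut_len h y w + h x y + h y x.
Proof.
move=> xy yw; rewrite (cut_len_edge h w xy).
have xw : connect (rm_edge x y) x w = false.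
  apply/negbTE; apply: contra (rm_edge_disconnects xy) => xw.
  by apply: connect_trans xw _; rewrite connect_rm_edgeC.
have yw' : connect (rm_edge y x) y w by rewrite (eq_connect (rm_edgeC y x)).
have yx : connect (rm_edge y x) y x = false.
  by apply/negbTE/rm_edge_disconnects; rewrite e_sym.
have xy' : connect (rm_edge x y) x y = false by apply/negbTE/rm_edge_disconnects.
rewrite /separates /side /= xw yw' yx xy' !connect0 /=; ring.
Qed.

Section CutLength.
Variable h : V -> V -> R.
Hypothesis h_sym : forall p q, e p q -> h p q = h q p.

Lemma cut_len_uniq_path x s : path e x s -> uniq (x :: s) ->
  cut_len h x (last x s) = 2 * walk_len h x s.
Proof.
elim: s x => [|y s IH] x /=; first by rewrite cut_len_xx mulr0.
move=> /andP[xy ys] /andP[xys uys].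
rewrite (cut_len_edge_far _ xy) ?IH // -?(h_sym xy); first ring.
by apply/connectP; exists s => //; exact: path_rm_edge.
Qed.

Hypothesis h_ge0 : forall p q, e p q -> 0 <= h p q.

Lemma cut_len_le_walk x s : path e x s -> cut_len h x (last x s) <= 2 * walk_len h x s.
Proof.
elim: s x => [|y s IH] x /=; first by rewrite cut_len_xx mulr0.
move=> /andP[xy ys]; have := cut_len_le_edge (last y s) h_ge0 xy.
by rewrite -(h_sym xy); have := IH y ys; lra.
Qed.

Lemma uniq_path_le_walk x P s : path e x P -> uniq (x :: P) -> path e x s ->
  last x s = last x P -> walk_len h x P <= walk_len h x s.
Proof.
move=> xP uP xs sP; have := cut_len_le_walk xs.
by rewrite sP cut_len_uniq_path //; lra.
Qed.

Lemma dist_uniq_path x P : path e x P -> uniq (x :: P) ->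
  dist e h x (last x P) = walk_len h x P.
Proof.
move=> xP uP; apply/le_anti; rewrite (dist_le_walk h_ge0 xP) /=.
by apply: (le_dist xP erefl) => t xt tP; exact: uniq_path_le_walk.
Qed.

End CutLength.

Lemma uniq_parent r w z1 z2 : e w z1 -> e w z2 ->
  ~~ connect (rm_edge w z1) w r -> ~~ connect (rm_edge w z2) w r -> z1 = z2.
Proof.
have := tree_pathP w r; case: (tree_path w r) => [|t P] /= [wP Pr uP].
  by rewrite -Pr connect0.
move: wP uP => /andP[wt tP] /andP[wtP _].
suff towards z : e w z -> ~~ connect (rm_edge w z) w r -> t = z.
  by move=> wz1 wz2 /(towards _ wz1) <- /(towards _ wz2).
move=> wz; apply: contraNeq => tz; apply/connectP; exists (t :: P) => //=.
rewrite path_rm_edge // andbT /rm_edge wt eqxx /= (negbTE tz) /=.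
by rewrite (negbTE (edge_neq wz)).
Qed.

(* Orienting every edge towards a root r, each vertex has at most one parent,
   so a dart is determined by its child endpoint and its direction. *)
Lemma card_darts : (#|[pred f : V * V | e f.1 f.2]| <= 2 * #|V|)%N.
Proof.
case: (pickP (fun _ : V => true)) => [r _|V0]; last first.
  suff -> : #|[pred f : V * V | e f.1 f.2]| = 0%N by [].
  by apply/eq_card0 => -[u v]; have := V0 u.
pose child (f : V * V) :=
  if connect (rm_edge f.1 f.2) f.1 r then (f.2, false) else (f.1, true).
rewrite (_ : (2 * #|V|)%N = #|{: V * bool}|); last by rewrite card_prod card_bool mulnC.
apply: (@leq_card_in _ _ child) => -[u v] [u' v']; rewrite !inE /= => uv u'v'.
have towards_r a b : e a b -> connect (rm_edge a b) a r -> ~~ connect (rm_edge b a) b r.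
  move=> ab ar; apply: contra (rm_edge_disconnects ab) => br.
  apply: connect_trans ar _; rewrite connect_rm_edgeC.
  by rewrite -(eq_connect (rm_edgeC b a)).
rewrite /child /=; case: ifP => c; case: ifP => c' /= -[E1] //; last first.
  by subst u'; rewrite (uniq_parent uv u'v' (negbT c) (negbT c')).
subst v'; have vu : e v u by rewrite e_sym.
have vu' : e v u' by rewrite e_sym.
by rewrite (uniq_parent vu vu' (towards_r _ _ uv c) (towards_r _ _ u'v' c')).
Qed.

Section Construction.
Variable ord : V -> seq V.
Hypothesis ordP : forall u, uniq (ord u) /\ (forall v, (v \in ord u) = e u v).

Lemma sum_size_ord t : uniq t -> (\sum_(v <- t) size (ord v) <= 2 * #|V|)%N.
Proof.
move=> ut; apply: leq_trans card_darts.
have -> : #|[pred f : V * V | e f.1 f.2]| = (\sum_v size (ord v))%N.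
  rewrite -sum1_card -(pair_big_dep xpredT (fun v z => e v z) (fun _ _ => 1%N)) /=.
  apply: eq_bigr => v _; rewrite sum1_card.
  have [uo ordE] := ordP v; rewrite -(card_uniqP uo); apply: eq_card => z.
  by rewrite ordE.
rewrite (big_uniq _ ut) /= [X in (_ <= X)%N](bigID (mem t)) /=.
exact: leq_addr.
Qed.

Variables (lam : V -> V -> R) (k : nat) (U : 'I_k -> {set V}) (delta delta' : R).

Local Notation E' := (@Tp_edge V e ord).
Local Notation len' := (@Tp_len R V e lam k U delta delta').
Local Notation dist' := (dist E' len').

Hypothesis lam_gt0 : forall u v, e u v -> 0 < lam u v.
Hypothesis lam_sym : forall u v, e u v -> lam u v = lam v u.
Hypothesis U_cover : forall x, exists i, x \in U i.
Hypothesis U_disjoint : forall i j, i != j -> [disjoint U i & U j].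
Hypothesis U_connected : forall i, induced_connected e (U i).
Hypothesis delta_gt0 : 0 < delta.
Hypothesis delta_small : delta < res' e lam / (6 * #|V|%:R).
Hypothesis delta'E : delta' = delta / (4 * #|V|%:R).

Lemma part_uniq x i j : x \in U i -> x \in U j -> i = j.
Proof.
move=> xi xj; apply/eqP; apply: contraT => ij.
by move: (disjointFr (U_disjoint ij) xi); rewrite xj.
Qed.

Lemma mem_part x m i : x \in U m -> (x \in U i) = (i == m).
Proof. by move=> xm; apply/idP/eqP => [xi|->//]; exact: part_uniq xi xm. Qed.

Lemma same_partC u v : same_part U u v = same_part U v u.
Proof. by apply/existsP/existsP => -[i /andP[ui vi]]; exists i; rewrite ui vi. Qed.

(* With #|V| = 0 the bound would read delta < res' / 0 = 0. *)
Lemma card_V_gt0 : (0 < #|V|)%N.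
Proof.
rewrite lt0n; apply: contraTneq delta_small => ->.
by rewrite mulr0 invr0 mulr0 -leNgt ltW.
Qed.

Lemma res'_gt : 6 * (delta * #|V|%:R) < res' e lam.
Proof.
have n6_gt0 : 0 < 6 * #|V|%:R :> R by rewrite mulr_gt0 // ltr0n card_V_gt0.
by move: delta_small; rewrite ltr_pdivlMr // mulrCA.
Qed.

Lemma res'_le v v' u : 0 < dist e lam v u - dist e lam v' u ->
  res' e lam <= dist e lam v u - dist e lam v' u.
Proof.
move=> gap; apply: ge_inf; last by split => //; exists v, v', u.
by exists 0 => r [r_gt0 _]; exact: ltW.
Qed.

Lemma lam_ge0 u v : e u v -> 0 <= lam u v.
Proof. by move=> uv; exact/ltW/lam_gt0. Qed.

Lemma dist_edge u v : e u v -> dist e lam u v = lam u v.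
Proof.
move=> uv; have := dist_uniq_path lam_sym lam_ge0 (x := u) (P := [:: v]).
by rewrite /= uv addr0 inE edge_neq //; apply.
Qed.

Lemma res'_le_lam u v : e u v -> res' e lam <= lam u v.
Proof.
move=> uv; have := @res'_le u v v; rewrite dist_edge // dist_xx ?subr0; last exact: lam_ge0.
by apply; exact: lam_gt0.
Qed.

(* An isolated vertex is the whole tree, and then res' = inf set0 = 0. *)
Lemma exists_neighbor x : exists z, e x z.
Proof.
case: (pickP (e x)) => [z xz|x_isolated]; first by exists z.
have all_x v : v = x.
  have /connectP [[|y p] xp ->] := e_conn x v => //.
  by move: xp => /= /andP[]; rewrite x_isolated.
suff res'0 : res' e lam = 0.
  have := res'_gt; rewrite res'0.
  have : 0 < delta * #|V|%:R by rewrite mulr_gt0 // ltr0n card_V_gt0.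
  lra.
rewrite /res'; match goal with |- inf ?X = _ => have -> : X = set0 end; last exact: inf0.
rewrite predeqE => r; split => // -[r_gt0 [v [v' [u r_diff]]]].
by move: r_gt0; rewrite r_diff (all_x v) (all_x v') subrr ltxx.
Qed.

Lemma delta'_ge0 : 0 <= delta'.
Proof. by rewrite delta'E divr_ge0 ?mulr_ge0 ?ler0n // ltW. Qed.

Lemma delta'_darts : delta' * (2 * #|V|)%:R = delta / 2.
Proof.
have n_neq0 : #|V|%:R != 0 :> R by rewrite pnatr_eq0 -lt0n card_V_gt0.
by rewrite delta'E natrM; field; rewrite n_neq0.
Qed.

Definition boundary (u v : V) : R := if same_part U u v then 0 else 1.

Definition cross_len (u v : V) : R := lam u v - delta * boundary u v.

Lemma boundary_ge0 u v : 0 <= boundary u v.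
Proof. by rewrite /boundary; case: same_part. Qed.

Lemma boundary_le1 u v : boundary u v <= 1.
Proof. by rewrite /boundary; case: same_part. Qed.

Lemma boundaryC u v : boundary u v = boundary v u.
Proof. by rewrite /boundary same_partC. Qed.

Lemma cross_lenC u v : e u v -> cross_len u v = cross_len v u.
Proof. by move=> uv; rewrite /cross_len boundaryC lam_sym. Qed.

Lemma walk_len_cross_len x s :
  walk_len cross_len x s = walk_len lam x s - delta * walk_len boundary x s.
Proof. exact: walk_lenBM. Qed.

Lemma cross_len_ge0 u v : e u v -> 0 <= cross_len u v.
Proof.
move=> uv; have := res'_le_lam uv; have := res'_gt.
have : delta <= 6 * (delta * #|V|%:R).
  have : 1 <= #|V|%:R :> R by rewrite ler1n card_V_gt0.
  by rewrite mulrCA => n_ge1; apply: ler_peMr; [exact: ltW | lra].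
have := ler_piMr (ltW delta_gt0) (boundary_le1 u v).
rewrite /cross_len; lra.
Qed.

Lemma Tp_lenE (a b : dart e) : len' a b =
  if ((val a).1 == (val b).2) && ((val a).2 == (val b).1)
  then cross_len (val a).1 (val a).2 else delta'.
Proof.
rewrite /Tp_len /cross_len /boundary; case: ifP => // _.
by case: same_part; rewrite ?mulr0 ?subr0 ?mulr1.
Qed.

Lemma Tp_len_ge0 (a b : dart e) : 0 <= len' a b.
Proof.
rewrite Tp_lenE; case: ifP => _; last exact: delta'_ge0.
exact: cross_len_ge0 (valP a).
Qed.

Definition reach_within (a b : dart e) (c : R) :=
  exists s, [/\ path E' a s, last a s = b & walk_len len' a s <= c].

Lemma reach_refl a : reach_within a a 0.
Proof. by exists [::]. Qed.

Lemma reach_le a b c c' : c <= c' -> reach_within a b c -> reach_within a b c'.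
Proof. by move=> cc' [s [a_s sb sc]]; exists s; split => //; exact: le_trans cc'. Qed.

Lemma reach_trans a b d c1 c2 :
  reach_within a b c1 -> reach_within b d c2 -> reach_within a d (c1 + c2).
Proof.
move=> [s [a_s sb sc]] [t [b_t td tc]]; exists (s ++ t).
by rewrite cat_path last_cat walk_len_cat sb a_s b_t td lerD.
Qed.

Lemma reach_edge a b : E' a b -> reach_within a b (len' a b).
Proof. by move=> ab; exists [:: b]; rewrite /= ab addr0. Qed.

Lemma reach_consec (a : dart e) q :
  path (consec (ord (val a).1)) (val a).2 q -> all (mem (ord (val a).1)) q ->
  forall b : dart e, val b = ((val a).1, last (val a).2 q) ->
  reach_within a b (delta' * (size q)%:R).
Proof.
elim: q a => [|z q IH] a /=.
  move=> _ _ b ba; have -> : b = a by apply: val_inj => /=; rewrite ba; case: (sval a).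
  by rewrite mulr0; exact: reach_refl.
move=> /andP[a2z zq] /andP[z_ord q_ord] b bq.
have uz : e (val a).1 z by rewrite -(proj2 (ordP _)).
have a_step : reach_within a (dart_of uz) delta'.
  have := reach_edge (a := a) (b := dart_of uz).
  rewrite Tp_lenE /= (negbTE (edge_neq uz)) /=; apply.
  by rewrite /Tp_edge /= eqxx a2z orbT.
rewrite -natr1 mulrDr mulr1 addrC; exact: reach_trans a_step (IH (dart_of uz) zq q_ord b bq).
Qed.

Lemma reach_same_tail (a b : dart e) : (val a).1 = (val b).1 ->
  reach_within a b (delta' * (size (ord (val a).1))%:R).
Proof.
move=> ab.
have a2 : (val a).2 \in ord (val a).1 by rewrite (proj2 (ordP _)); exact: valP a.
have b2 : (val b).2 \in ord (val a).1 by rewrite ab (proj2 (ordP _)); exact: valP b.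
have [q [a2q qb2 q_ord] size_q] := consec_path a2 b2.
apply: reach_le (reach_consec a2q q_ord _); last by rewrite qb2 ab; case: (val b).
by rewrite ler_wpM2l ?delta'_ge0 // ler_nat ltnW.
Qed.

Lemma reach_lift_path u s (a b : dart e) :
  path e u s -> (val a).1 = u -> (val b).1 = last u s ->
  reach_within a b
    (walk_len cross_len u s + delta' * (\sum_(v <- u :: s) size (ord v))%:R).
Proof.
elim: s u a => [|y s IH] u a /=.
  move=> _ au bu; rewrite add0r big_cons big_nil addn0 -au.
  by apply: reach_same_tail; rewrite au bu.
move=> /andP[uy ys] au bs; pose c := dart_of uy.
have ac := reach_same_tail (b := c) au.
have c_rev : reach_within c (rev_dart c) (cross_len u y).
  have := reach_edge (a := c) (b := rev_dart c); rewrite Tp_lenE /= !eqxx; apply.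
  by rewrite /Tp_edge /= !eqxx.
have := reach_trans (reach_trans ac c_rev) (IH y (rev_dart c) ys erefl bs).
apply: reach_le; rewrite au !big_cons !natrD; lra.
Qed.

Lemma cut_len_le_Tp_walk (a : dart e) s : path E' a s ->
  cut_len cross_len (val a).1 (val (last a s)).1 <= 2 * walk_len len' a s.
Proof.
elim: s a => [|b s IH] a /=; first by rewrite cut_len_xx mulr0.
move=> /andP[ab bs]; have := IH b bs; rewrite (Tp_lenE a b).
case: ifP => [/andP[/eqP a1b2 /eqP a2b1] | not_cross].
  have a12 : e (val a).1 (val a).2 := valP a.
  have := cut_len_le_edge (val (last b s)).1 cross_len_ge0 a12.
  by rewrite -(cross_lenC a12) a2b1; lra.
move: ab; rewrite /Tp_edge not_cross /= => /andP[/eqP -> _].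
by have := delta'_ge0; lra.
Qed.

Definition crossings (x y : V) : R := walk_len boundary x (tree_path x y).

Lemma dist'_approx (a b : dart e) x y : (val a).1 = x -> (val b).1 = y ->
  dist e lam x y - delta * crossings x y <= dist' a b
  <= dist e lam x y - delta * crossings x y + delta / 2.
Proof.
move=> <- <-; have [aP Pb uP] := tree_pathP (val a).1 (val b).1.
rewrite /crossings -{1 3}Pb (dist_uniq_path lam_sym lam_ge0) // -walk_len_cross_len.
have [s [a_s sb s_le]] := reach_lift_path aP erefl (esym Pb).
apply/andP; split.
  apply: (le_dist a_s sb) => t a_t tb; have := cut_len_le_Tp_walk a_t.
  by rewrite tb -{1}Pb cut_len_uniq_path //; [lra | exact: cross_lenC].
have := dist_le_walk (fun x y _ => Tp_len_ge0 x y) a_s; rewrite sb => /le_trans; apply.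
apply: le_trans s_le _; rewrite lerD2l -delta'_darts ler_wpM2l ?delta'_ge0 //.
by rewrite ler_nat sum_size_ord.
Qed.

Lemma crossings_ge0 x y : 0 <= crossings x y.
Proof.
have [xP _ _] := tree_pathP x y.
rewrite /crossings; apply: walk_len_ge0 xP => u v _; exact: boundary_ge0.
Qed.

Lemma crossings_le x y : crossings x y <= #|V|%:R - 1.
Proof.
have [_ _ uP] := tree_pathP x y; rewrite /crossings.
have : (size (x :: tree_path x y) <= #|V|)%N by rewrite -(card_uniqP uP) max_card.
rewrite /= -(ler_nat R) -natr1 => size_le.
suff : walk_len boundary x (tree_path x y) <= (size (tree_path x y))%:R by lra.
move: {uP size_le} (tree_path x y) => P; elim: P x => [|z P IH] x //=.
by rewrite -natr1 addrC lerD ?boundary_le1.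
Qed.

Lemma crossings_same_part j x y : x \in U j -> y \in U j -> crossings x y = 0.
Proof.
move=> xj yj; have /connectP [Q xQ yQ] := U_connected xj yj.
have Q0 : walk_len boundary x Q = 0.
  elim: Q x {xj yQ} xQ => [|z Q IH] x //= /andP[/and3P[_ xj zj] zQ].
  by rewrite IH // addr0 /boundary ifT //; apply/existsP; exists j; rewrite xj zj.
have [xP Py uP] := tree_pathP x y; apply/le_anti; rewrite crossings_ge0 andbT -Q0.
have xQ' : path e x Q by apply: sub_path xQ => u v /and3P[].
apply: (uniq_path_le_walk (fun u v (_ : e u v) => boundaryC u v)
                          (fun u v (_ : e u v) => boundary_ge0 u v) xP uP xQ').
by rewrite -yQ Py.
Qed.

Lemma walk_len_boundary_ge1 i x P : path e x P -> x \in U i -> last x P \notin U i ->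
  1 <= walk_len boundary x P.
Proof.
elim: P x => [|z P IH] x /=; first by move=> _ ->.
move=> /andP[xz zP] xi Pi; rewrite /boundary; case: ifP => [/existsP[m /andP[xm zm]]|_].
  by rewrite add0r (IH z zP) // (part_uniq xi xm).
by rewrite lerDl (walk_len_ge0 (fun u v (_ : e u v) => boundary_ge0 u v) zP).
Qed.

Lemma crossings_leave_part i x y : x \in U i -> y \notin U i -> 1 <= crossings x y.
Proof.
have [xP Py _] := tree_pathP x y; move=> xi yi.
by apply: walk_len_boundary_ge1 xP xi _; rewrite Py.
Qed.

Lemma yes_lift S : GGIV_yes e lam U S -> GGIV_yes E' len' (Tp_set e U) (Tp_set e S).
Proof.
move=> [s [sS sU]]; pose s' i := dart_of (xchooseP (exists_neighbor (s i))).
exists s'; split => [i|i]; first by rewrite inE; exact: sS.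
apply/setP => b; have [m bm] := U_cover (val b).1.
rewrite inE (mem_part i bm) (mem_cell_strict (m := m)) // => j jm.
have near_m : dist e lam (s m) (val b).1 < dist e lam (s j) (val b).1.
  move: (bm); rewrite sU inE => /forallP m_le; rewrite lt_neqAle m_le andbT.
  apply: contra jm => /eqP dist_eq; apply/eqP/(part_uniq _ bm).
  by rewrite sU inE; apply/forallP => l; rewrite -dist_eq.
have gap : res' e lam <= dist e lam (s j) (val b).1 - dist e lam (s m) (val b).1.
  by apply: res'_le; rewrite subr_gt0.
have /andP[_ up_m] :=
  dist'_approx (a := s' m) (b := b) (x := s m) (y := (val b).1) erefl erefl.
have /andP[lo_j _] :=
  dist'_approx (a := s' j) (b := b) (x := s j) (y := (val b).1) erefl erefl.
(* d'(s'_m, b) <= d_m + delta / 2 < d_j - delta (n - 1) <= d'(s'_j, b),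
   as d_j - d_m >= res' > 6 n delta. *)
have := mulr_ge0 (ltW delta_gt0) (crossings_ge0 (s m) (val b).1).
have := ler_wpM2l (ltW delta_gt0) (crossings_le (s j) (val b).1).
have := mulr_ge0 (ltW delta_gt0) (ler0n R #|V|).
have := res'_gt; have := delta_gt0; rewrite mulrBr mulr1; lra.
Qed.

Lemma yes_project S : GGIV_yes E' len' (Tp_set e U) (Tp_set e S) -> GGIV_yes e lam U S.
Proof.
move=> [s' [s'S s'U]]; exists (fun i => (val (s' i)).1).
split => [i|i]; first by move: (s'S i); rewrite inE.
have s'_part j : (val (s' j)).1 \in U j.
  suff : s' j \in Tp_set e U j by rewrite inE.
  rewrite s'U inE; apply/forallP => l.
  by rewrite dist_xx ?dist_ge0 // => ? ? _; exact: Tp_len_ge0.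
apply/setP => x; have [m xm] := U_cover x.
rewrite (mem_part i xm) (mem_cell_strict (m := m)) // => j jm.
have [z xz] := exists_neighbor x; pose b := dart_of xz.
have : b \in cell E' len' s' m by rewrite -s'U inE.
rewrite inE => /forallP /(_ j) b_near.
suff near_m : dist e lam (val (s' m)).1 x < dist e lam (val (s' j)).1 x by [].
have /andP[lo_m _] :=
  dist'_approx (a := s' m) (b := b) (x := (val (s' m)).1) (y := x) erefl erefl.
have /andP[_ up_j] :=
  dist'_approx (a := s' j) (b := b) (x := (val (s' j)).1) (y := x) erefl erefl.
rewrite (crossings_same_part (s'_part m) xm) mulr0 subr0 in lo_m.
have x_notin_j : x \notin U j by rewrite (mem_part j xm).
(* d_m <= d'(s'_m, b) <= d'(s'_j, b) <= d_j - delta + delta / 2. *)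
have := ler_wpM2l (ltW delta_gt0) (crossings_leave_part (s'_part j) x_notin_j).
have := delta_gt0; rewrite mulr1; lra.
Qed.

End Construction.
End Tree.

Theorem lemma20 (R : realType) (V : finType) (e : rel V) (lam : V -> V -> R)
    (k : nat) (U S : 'I_k -> {set V}) (ord : V -> seq V) (delta : R) :
  is_tree e ->
  (forall u v, e u v -> 0 < lam u v) ->
  (forall u v, e u v -> lam u v = lam v u) ->
  (forall x : V, exists i, x \in U i) ->
  (forall i j, i != j -> [disjoint U i & U j]) ->
  (forall i, induced_connected e (U i)) ->
  (forall u, uniq (ord u) /\ (forall v, (v \in ord u) = e u v)) ->
  0 < delta ->
  delta < res' e lam / (6 * #|V|%:R) ->
  GGIV_yes e lam U S <->
  GGIV_yes (@Tp_edge V e ord)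
           (@Tp_len R V e lam k U delta (delta / (4 * #|V|%:R)))
           (Tp_set e U) (Tp_set e S).
Proof.
move=> [e_sym e_irr e_conn e_acyclic] lam_gt0 lam_sym U_cover U_disjoint U_connected
  ordP delta_gt0 delta_small.
by split; [apply: yes_lift | apply: yes_project].
Qed.
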